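(* Let $\mathcal A\in\mathbb C^{n_1\times n_1\times n_3}$ with $\mathrm{ind}(\mathcal A)=k$ and let $\mathcal A^-$ be a fixed element of $\mathcal A\{1\}$. If $\mathcal A^{-,D}$ is idempotent, then: (a) $\mathcal A^k=\mathcal A^{k+1}$, and moreover $\mathcal A^D\mathcal A^k=\mathcal A^k$; (b) $(\mathcal A^{-,D})^k=(\mathcal A^{-,D})^k\mathcal A$, and moreover $(\mathcal A^{-,D})^m=(\mathcal A^{-,D})^m\mathcal A$ for every positive integer $m$; (c) $\mathcal A^{-,D}=(\mathcal A^{-,D})^m\mathcal A^m$ for every positive integer $m$; (d) $\mathcal A^k\mathcal A^{-,D}=\mathcal A^k$.
   Context: Fix a nonsingular matrix $M\in\mathbb C^{n_3\times n_3}$. For $\mathcal C\in\mathbb C^{n_1\times n_2\times n_3}$ let $\widehat{\mathcal C}=\mathcal C\times_3M$, i.e. $\widehat{\mathcal C}_{ijk}=\sum_{l=1}^{n_3}M_{kl}\mathcal C_{ijl}$, and let $\widehat{\mathcal C}^{(i)}$ denote its $i$-th frontal slice. The M-product $\mathcal C\star_M\mathcal D$ of $\mathcal C\in\mathbb C^{n_1\times n_2\times n_3}$ and $\mathcal D\in\mathbb C^{n_2\times l\times n_3}$ is the unique tensor with $\widehat{\mathcal C\star_M\mathcal D}^{(i)}=\widehat{\mathcal C}^{(i)}\widehat{\mathcal D}^{(i)}$ for all $i\in[n_3]$. Juxtaposition of tensors denotes the M-product; powers are M-product powers with $\mathcal A^0=\mathcal I$ where $\widehat{\mathcal I}^{(i)}=I_{n_1}$.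 $\mathcal A\{1\}$ is the set of all $\mathcal W$ with $\mathcal A\mathcal W\mathcal A=\mathcal A$. The index $\mathrm{ind}(\mathcal A)$ is $\max_{i}\mathrm{ind}(\widehat{\mathcal A}^{(i)})$, where the index of a square matrix $B$ is the least $k\ge0$ with $\mathrm{rank}(B^{k+1})=\mathrm{rank}(B^k)$. For $\mathrm{ind}(\mathcal A)=k$, the Drazin inverse $\mathcal A^D$ is the unique $\mathcal W$ with $\mathcal W\mathcal A^{k+1}=\mathcal A^k$, $\mathcal W\mathcal A\mathcal W=\mathcal W$, $\mathcal A\mathcal W=\mathcal W\mathcal A$. The 1-D inverse is $\mathcal A^{-,D}=\mathcal A^-\mathcal A\mathcal A^D$; it is idempotent if $(\mathcal A^{-,D})^2=\mathcal A^{-,D}$. *)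

From HB Require Import structures.
From mathcomp Require Import all_boot all_order all_algebra.
From mathcomp Require Import complex.
From mathcomp Require Import reals.
Set Implicit Arguments. Unset Strict Implicit. Unset Printing Implicit Defensive.
Import Order.TTheory GRing.Theory Num.Theory.
Local Open Scope ring_scope.

(* Third-order tensors in F^{n1 x n2 x n3}, stored by frontal slices:
   T k = the k-th frontal slice, so T k i j = T_{ijk}. *)
Definition tensor (F : Type) (n3 n1 n2 : nat) := {ffun 'I_n3 -> 'M[F]_(n1, n2)}.

Section MProduct.
Variables (F : fieldType) (n3 : nat) (M : 'M[F]_n3).

Definition thatm n1 n2 (C : tensor F n3 n1 n2) : tensor F n3 n1 n2 :=
  [ffun k => \sum_(l < n3) M k l *: C l].

Definition tunhat n1 n2 (C : tensor F n3 n1 n2) : tensor F n3 n1 n2 :=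
  [ffun k => \sum_(l < n3) invmx M k l *: C l].

Definition tmul n1 n2 p (C : tensor F n3 n1 n2) (D : tensor F n3 n2 p)
  : tensor F n3 n1 p :=
  tunhat [ffun i => thatm C i *m thatm D i].

Definition tid n1 : tensor F n3 n1 n1 := tunhat [ffun _ => 1%:M].

Fixpoint tpow n1 (A : tensor F n3 n1 n1) (m : nat) : tensor F n3 n1 n1 :=
  match m with
  | 0 => tid n1
  | m'.+1 => tmul (tpow A m') A
  end.

(* index of a square matrix: least k >= 0 with rank(B^{k+1}) = rank(B^k)
   (such k always exists and is <= n, so searching 0..n finds the least one) *)
Definition mxindex n (B : 'M[F]_n) : nat :=
  find (fun k => \rank (B ^+ k.+1) == \rank (B ^+ k)) (iota 0 n.+1).

Definition tindex n1 (A : tensor F n3 n1 n1) : nat :=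
  \max_(i < n3) mxindex (thatm A i).

Definition tinner1 n1 n2 (A : tensor F n3 n1 n2) (W : tensor F n3 n2 n1) : Prop :=
  tmul (tmul A W) A = A.

Definition is_tdrazin n1 (A W : tensor F n3 n1 n1) : Prop :=
  let k := tindex A in
  [/\ tmul W (tpow A k.+1) = tpow A k, tmul (tmul W A) W = W & tmul A W = tmul W A].

Definition t1D n1 (Am A AD : tensor F n3 n1 n1) : tensor F n3 n1 n1 :=
  tmul (tmul Am A) AD.

End MProduct.

From HB Require Import structures.
From mathcomp Require Import all_boot all_order all_algebra.
From mathcomp Require Import complex.
From mathcomp Require Import reals.
Import GRing.Theory Num.Theory.
Local Open Scope ring_scope.
Local Open Scope complex_scope.
Set Implicit Arguments. Unset Strict Implicit.

(* In the transform domain the M-product acts slice by slice, so it suffices to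
   treat elements a, w, d of a ring with a w a = a, d a^(k+1) = a^k, d a d = d,
   a d = d a and x = w a d idempotent.  Since a x = a d, we get
   d = d (a w a) d = a (x x) = a x = a d, hence also d a = d, and then
   a^k = d a^(k+1) = a (d a^(k+1)) = a^(k+1) and x a = w a (d a) = x. *)

Section IdempotentOneDrazin.
Variables (R : pzSemiRingType) (a w d : R) (k : nat).
Hypotheses (a_inner : a * w * a = a) (d_pow : d * a ^+ k.+1 = a ^+ k)
  (d_outer : d * a * d = d) (ad_comm : a * d = d * a).
Let x := w * a * d.
Hypothesis x_idem : x * x = x.

Lemma mul_inner_1D : a * x = a * d.
Proof. by rewrite /x !mulrA a_inner. Qed.

Lemma drazin_mull : a * d = d.
Proof.
have axx : a * (x * x) = d.
  by rewrite mulrA mul_inner_1D /x ad_comm !mulrA -(mulrA d a) -(mulrA d) a_inner d_outer.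
by rewrite -{2}axx x_idem mul_inner_1D.
Qed.

Lemma drazin_mulr : d * a = d.
Proof. by rewrite -ad_comm drazin_mull. Qed.

Lemma expr_index_succ : a ^+ k = a ^+ k.+1.
Proof. by rewrite -{1}d_pow -{1}drazin_mull -mulrA d_pow exprS. Qed.

Lemma drazin_mul_expr_index : d * a ^+ k = a ^+ k.
Proof. by rewrite {1}expr_index_succ d_pow. Qed.

Lemma inner_1D_mulr : x * a = x.
Proof. by rewrite /x -mulrA drazin_mulr. Qed.

Lemma inner_1D_mul_expr m : x * a ^+ m = x.
Proof. by elim: m => [|m IHm]; rewrite ?mulr1 // exprSr mulrA IHm inner_1D_mulr. Qed.

Lemma inner_1D_expr m : (0 < m)%N -> x ^+ m = x.
Proof. by case: m => // m _; elim: m => // m IHm; rewrite exprS IHm x_idem. Qed.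

Lemma expr_index_mul_inner_1D : a ^+ k * x = a ^+ k.
Proof.
rewrite {1}expr_index_succ exprSr -mulrA mul_inner_1D drazin_mull.
by rewrite -(commrX k (esym ad_comm)) drazin_mul_expr_index.
Qed.

Lemma idempotent_1D_identities :
  [/\ a ^+ k = a ^+ k.+1 /\ d * a ^+ k = a ^+ k,
      x ^+ k = x ^+ k * a /\ (forall m, (0 < m)%N -> x ^+ m = x ^+ m * a),
      (forall m, (0 < m)%N -> x = x ^+ m * a ^+ m)
    & a ^+ k * x = a ^+ k].
Proof.
have x_pow_mulr m : (0 < m)%N -> x ^+ m = x ^+ m * a.
  by move=> m_gt0; rewrite inner_1D_expr // inner_1D_mulr.
split=> //.
- by split; [exact: expr_index_succ | exact: drazin_mul_expr_index].
- split=> //; case: k expr_index_succ => [|k' _]; last exact: x_pow_mulr.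
  by rewrite expr1 expr0 mul1r.
- by move=> m m_gt0; rewrite inner_1D_expr // inner_1D_mul_expr.
- exact: expr_index_mul_inner_1D.
Qed.

End IdempotentOneDrazin.

Section TransformDomain.
Variables (F : fieldType) (n3 : nat) (M : 'M[F]_n3).
Hypothesis M_unit : M \in unitmx.

Lemma mode3_mulK n1 n2 (P Q : 'M[F]_n3) (C : 'I_n3 -> 'M[F]_(n1, n2)) j :
  P *m Q = 1%:M ->
  \sum_(l < n3) P j l *: (\sum_(m < n3) Q l m *: C m) = C j.
Proof.
move=> PQ; under eq_bigr do rewrite scaler_sumr.
rewrite exchange_big /=.
transitivity (\sum_(m < n3) (P *m Q) j m *: C m).
  apply: eq_bigr => m _; rewrite mxE scaler_suml.
  by apply: eq_bigr => l _; rewrite scalerA.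
rewrite PQ (bigD1 j) //= big1 ?addr0; first by rewrite mxE eqxx scale1r.
by move=> m /negbTE; rewrite mxE eq_sym => ->; rewrite scale0r.
Qed.

Lemma thatmK n1 n2 (C : tensor F n3 n1 n2) : thatm M (tunhat M C) = C.
Proof.
apply/ffunP => j; rewrite ffunE; under eq_bigr do rewrite ffunE.
by apply: mode3_mulK; rewrite mulmxV.
Qed.

Lemma tunhatK n1 n2 (C : tensor F n3 n1 n2) : tunhat M (thatm M C) = C.
Proof.
apply/ffunP => j; rewrite ffunE; under eq_bigr do rewrite ffunE.
by apply: mode3_mulK; rewrite mulVmx.
Qed.

Lemma thatm_eqP n1 n2 (C D : tensor F n3 n1 n2) :
  C = D <-> forall i, thatm M C i = thatm M D i.
Proof.
split=> [-> // | eqCD]; rewrite -(tunhatK C) -(tunhatK D).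
by congr tunhat; apply/ffunP.
Qed.

Lemma thatm_tmul n1 n2 p (C : tensor F n3 n1 n2) (D : tensor F n3 n2 p) i :
  thatm M (tmul M C D) i = thatm M C i *m thatm M D i.
Proof. by rewrite thatmK ffunE. Qed.

Lemma thatm_tpow n1 (A : tensor F n3 n1 n1) m i :
  thatm M (tpow M A m) i = thatm M A i ^+ m.
Proof.
elim: m => [|m IHm] /=; first by rewrite thatmK ffunE.
by rewrite thatm_tmul IHm exprSr mulmxE.
Qed.

Lemma idempotent_t1D_identities n1 (A Am AD : tensor F n3 n1 n1) k :
  tindex M A = k ->
  tinner1 M A Am ->
  is_tdrazin M A AD ->
  let X := t1D M Am A AD in
  tmul M X X = X ->
  [/\ (tpow M A k = tpow M A k.+1 /\ tmul M AD (tpow M A k) = tpow M A k),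
      (tpow M X k = tmul M (tpow M X k) A /\
       forall m : nat, (0 < m)%N -> tpow M X m = tmul M (tpow M X m) A),
      (forall m : nat, (0 < m)%N -> X = tmul M (tpow M X m) (tpow M A m))
    & tmul M (tpow M A k) X = tpow M A k].
Proof.
move=> index_A; have hatP := thatm_eqP.
move=> /hatP inner []; rewrite index_A => /hatP pow /hatP outer /hatP comm X.
rewrite {}/X /t1D => /hatP X_idem.
have hatE := (thatm_tpow, thatm_tmul, mulmxE).
have slice (i : 'I_n3) := @idempotent_1D_identities _ (thatm M A i) (thatm M Am i) (thatm M AD i) k
  ltac:(by have := inner i; rewrite !hatE) ltac:(by have := pow i; rewrite !hatE)
  ltac:(by have := outer i; rewrite !hatE) ltac:(by have := comm i; rewrite !hatE)
  ltac:(by have := X_idem i; rewrite !hatE).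
split; [split | split | move=> m m_gt0 |]; try move=> m m_gt0;
  apply/hatP => i; rewrite !hatE; have [[? ?] [? ?] ? ?] := slice i; auto.
Qed.

End TransformDomain.

Theorem theorem3p6 (R : realType) (n1 n3 : nat) (M : 'M[R[i]]_n3)
  (A Am AD : tensor R[i] n3 n1 n1) (k : nat) :
  M \in unitmx ->
  tindex M A = k ->
  tinner1 M A Am ->
  is_tdrazin M A AD ->
  let X := t1D M Am A AD in
  tmul M X X = X ->
  [/\ (tpow M A k = tpow M A k.+1 /\ tmul M AD (tpow M A k) = tpow M A k),
      (tpow M X k = tmul M (tpow M X k) A /\
       forall m : nat, (0 < m)%N -> tpow M X m = tmul M (tpow M X m) A),
      (forall m : nat, (0 < m)%N -> X = tmul M (tpow M X m) (tpow M A m))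
    & tmul M (tpow M A k) X = tpow M A k].
Proof. by move=> M_unit; apply: idempotent_t1D_identities. Qed.
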